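(* Let $p$ be a prime and let $k\in\mathbb{Q}_p$ with $|k|_p>1$. For a vertex $v$ of the branch $T_{\mathbb{Z}_p}$ (described in the context) at depth $\ell$, define $$\phi(v)=\frac{p}{p+1}\int_{\mathbb{Z}_p} d\mu(x)\, e^{2\pi i\{kx\}}\, p^{-d_C(x,v)},$$ where $d\mu$ is the Haar measure on $\mathbb{Q}_p$ normalized by $\mu(\mathbb{Z}_p)=1$. If $0\le \ell< -\operatorname{ord}_p(k)-2$, then $\phi(v)=0$.
   Context: For $x\in\mathbb{Q}_p$, $\operatorname{ord}_p(x)$ is the $p$-adic valuation and $|x|_p=p^{-\operatorname{ord}_p(x)}$. The fractional part $\{\cdot\}:\mathbb{Q}_p\to\mathbb{Q}$ is defined by $\{\sum_{j=m}^\infty a_jp^j\}=\sum_{j=m}^{-1}a_jp^j$ (digits $a_j\in\{0,\dots,p-1\}$), interpreted as a rational number and equal to $0$ if $m\ge 0$. The Bruhat--Tits tree $T_p$ of $\mathbb{Q}_p$ is the $(p+1)$-regular tree whose space of ends is $\mathbb{P}^1(\mathbb{Q}_p)$. Fix the centerpoint $C$ to be the vertex below which the boundary ends form $\mathbb{Z}_p$. The branch $T_{\mathbb{Z}_p}$ below $C$ is described as follows: its vertices at depth $n\ge 0$ (distance $n$ from $C$) are the balls $a+p^n\mathbb{Z}_p$ with $a\in\mathbb{Z}_p$ (so $C=\mathbb{Z}_p$ is at depth $0$), each depth-$n$ ball being joined by an edge to the $p$ balls of radius $p^{-n-1}$ it contains; a boundary point $x\in\mathbb{Z}_p$ is the end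 given by the nested sequence of balls containing $x$. For $x\in\mathbb{Z}_p$ and a vertex $v$ at depth $\ell$ of this branch, let $j\le \ell$ be the largest depth such that $x$ lies in the ball of the ancestor of $v$ at depth $j$ (so $j=\ell$ iff $x\in v$). The regularized distance (the graph distance from $v$ to the end $x$, renormalized so that it vanishes at $v=C$) is $d_C(x,v)=(\ell-j)-j=\ell-2j$. *)

From Stdlib Require Import Reals ZArith Arith Lia.
From Coquelicot Require Import Coquelicot.
Open Scope R_scope.

(** p-adic integers, as the projective limit of Z/p^n Z:
    a sequence x with x n in {0,..,p^n-1} and x (n+1) = x n mod p^n.
    x n is the residue of x modulo p^n. *)
Definition is_Zp (p : nat) (x : nat -> nat) : Prop :=
  forall n, (x n < p ^ n)%nat /\ (x (S n) mod p ^ n = x n)%nat.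

Definition embedZp (p a : nat) : nat -> nat := fun n => (a mod p ^ n)%nat.

(** Elements of Q_p are written k = p^(-e) * z with e : nat and z in Z_p.
    ord_p(z) = o for z <> 0 in Z_p means z = 0 mod p^o but not mod p^(o+1). *)
Definition ordZp_is (p : nat) (z : nat -> nat) (o : nat) : Prop :=
  z o = 0%nat /\ z (S o) <> 0%nat.

(** ord_p(p^(-e) z) = ord_p(z) - e. *)
Definition ordQp_of (o e : nat) : Z := (Z.of_nat o - Z.of_nat e)%Z.

Definition absp (p : nat) (ordk : Z) : R := powerRZ (INR p) (- ordk).

(** Fractional part {k x} for k = p^(-e) z and x in Z_p:
    k x = p^(-e) (z x), and {p^(-e) w} = (w mod p^e) / p^e. *)
Definition frac_kx (p e : nat) (z x : nat -> nat) : R :=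
  INR ((z e * x e) mod p ^ e) / INR (p ^ e).

Definition cexp2pi (t : R) : C := (cos (2 * PI * t), sin (2 * PI * t)).

(** Vertex of the branch T_{Z_p} at depth l: the ball a + p^l Z_p, a < p^l.
    x lies in the ancestor at depth j iff x j = a mod p^j.
    [meet_depth p x a l] is the largest j <= l with x in the depth-j ancestor. *)
Fixpoint meet_depth (p : nat) (x : nat -> nat) (a : nat) (l : nat) : nat :=
  match l with
  | O => O
  | S m => if Nat.eqb (x (S m)) (a mod p ^ (S m)) then S m
           else meet_depth p x a m
  end.

Definition dC (p : nat) (x : nat -> nat) (a l : nat) : Z :=
  (Z.of_nat l - 2 * Z.of_nat (meet_depth p x a l))%Z.

(** Haar integral over Z_p (mu(Z_p) = 1) of a continuous f : Z_p -> C, as the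
    limit of the Riemann sums p^(-N) * sum_{a < p^N} f(a)
    (real and imaginary parts separately). *)
Definition riemann_sum (p : nat) (f : (nat -> nat) -> C) (N : nat) : C :=
  Cmult (RtoC (/ INR (p ^ N)))
        (sum_n (fun a => f (embedZp p a)) (p ^ N - 1)%nat).

Definition haar_int_Zp (p : nat) (f : (nat -> nat) -> C) : C :=
  (real (Lim_seq (fun N => Re (riemann_sum p f N))),
   real (Lim_seq (fun N => Im (riemann_sum p f N)))).

Definition phi (p e : nat) (z : nat -> nat) (a l : nat) : C :=
  Cmult (RtoC (INR p / INR (p + 1)))
    (haar_int_Zp p (fun x =>
       Cmult (cexp2pi (frac_kx p e z x))
             (RtoC (powerRZ (INR p) (- dC p x a l))))).

(** For [N >= e], write the residues [n < p^N] as [n = c + p^l t] with [c < p^l] and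
    [t < p^(N-l)].  The factor [p^(-d_C)] only sees [n mod p^l], i.e. [c], while the
    additive character [e^(2 pi i {k n})] splits as a function of [c] times
    [e^(2 pi i r t)] with [r = z_e / p^(e-l)].  Since [ord_p z < e - l], [r] is not an
    integer, yet [r p^(N-l)] is; so each inner sum over [t] is a vanishing geometric
    sum of roots of unity.  Every Riemann sum from [N = e] on is therefore [0]. *)

From Stdlib Require Import Reals ZArith Arith Znumtheory Lia Lra.
From Coquelicot Require Import Coquelicot.
Open Scope R_scope.

Fixpoint csum (n : nat) (g : nat -> C) : C :=
  match n with O => RtoC 0 | S n => (csum n g + g n)%C end.

Lemma csum_ext n f g :
  (forall i, (i < n)%nat -> f i = g i) -> csum n f = csum n g.
Proof. induction n; intros H; simpl; auto. rewrite IHn, H; auto. Qed.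

Lemma csum_eq0 n f : (forall i, (i < n)%nat -> f i = RtoC 0) -> csum n f = RtoC 0.
Proof. induction n; intros H; simpl; auto. rewrite IHn, H; auto. ring. Qed.

Lemma csum_add n f g : csum n (fun i => f i + g i)%C = (csum n f + csum n g)%C.
Proof. induction n; simpl. ring. rewrite IHn; ring. Qed.

Lemma csum_scal n c f : csum n (fun i => c * f i)%C = (c * csum n f)%C.
Proof. induction n; simpl. ring. rewrite IHn; ring. Qed.

Lemma csum_cat m n g :
  csum (m + n) g = (csum m g + csum n (fun i => g (m + i)%nat))%C.
Proof.
  induction n; simpl.
  - rewrite Nat.add_0_r; ring.
  - rewrite Nat.add_succ_r; simpl. rewrite IHn; ring.
Qed.

Lemma csum_recl n g : csum (S n) g = (g O + csum n (fun t => g (S t)))%C.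
Proof. induction n; simpl. ring. simpl in IHn; rewrite IHn; ring. Qed.

Lemma csum_mul_range A B g :
  csum (A * B) g = csum A (fun c => csum B (fun t => g (c + A * t)%nat)).
Proof.
  induction B; simpl.
  - rewrite Nat.mul_0_r. symmetry; apply csum_eq0; auto.
  - rewrite Nat.mul_succ_r, csum_cat, IHB, csum_add. f_equal.
    apply csum_ext; intros; f_equal; lia.
Qed.

Lemma sum_n_csum (g : nat -> C) n : sum_n g n = csum (S n) g.
Proof.
  induction n.
  - rewrite sum_O; simpl. ring.
  - rewrite sum_Sn, IHn. reflexivity.
Qed.

Lemma cexp2pi_add x y : cexp2pi (x + y) = (cexp2pi x * cexp2pi y)%C.
Proof.
  unfold cexp2pi. replace (2 * PI * (x + y)) with (2 * PI * x + 2 * PI * y) by ring.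
  rewrite cos_plus, sin_plus. unfold Cmult; simpl. f_equal; ring.
Qed.

Lemma cexp2pi_add_nat x k : cexp2pi (x + INR k) = cexp2pi x.
Proof.
  unfold cexp2pi.
  replace (2 * PI * (x + INR k)) with (2 * PI * x + 2 * INR k * PI) by ring.
  rewrite cos_period, sin_period; auto.
Qed.

Lemma cexp2pi_nat k : cexp2pi (INR k) = RtoC 1.
Proof.
  rewrite <- (Rplus_0_l (INR k)), cexp2pi_add_nat. unfold cexp2pi.
  rewrite Rmult_0_r, cos_0, sin_0. reflexivity.
Qed.

Lemma cexp2pi_mod n q : (q <> 0)%nat ->
  cexp2pi (INR (n mod q) / INR q) = cexp2pi (INR n / INR q).
Proof.
  intros hq. assert (INR q <> 0) by (apply not_0_INR; auto).
  rewrite (Nat.div_mod n q hq) at 2. rewrite plus_INR, mult_INR.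
  replace ((INR q * INR (n / q) + INR (n mod q)) / INR q)
    with (INR (n mod q) / INR q + INR (n / q)) by (field; auto).
  rewrite cexp2pi_add_nat; auto.
Qed.

Lemma cexp2pi_frac_neq1 w q : (0 < w < q)%nat -> cexp2pi (INR w / INR q) <> RtoC 1.
Proof.
  intros [hw hwq] H. unfold cexp2pi, RtoC in H. injection H as Hcos _.
  set (y := PI * (INR w / INR q)).
  assert (hfrac : 0 < INR w / INR q < 1).
  { apply lt_INR in hw, hwq. simpl in hw. split.
    - apply Rdiv_lt_0_compat; lra.
    - apply (Rmult_lt_reg_r (INR q)); [lra|]. field_simplify; lra. }
  assert (0 < y < PI) by (pose proof PI_RGT_0; unfold y; split; nra).
  replace (2 * PI * (INR w / INR q)) with (2 * y) in Hcos by (unfold y; ring).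
  rewrite cos_2a_sin in Hcos.
  pose proof (sin_gt_0 y ltac:(lra) ltac:(lra)). nra.
Qed.

(** Multiplying by [cexp2pi r] shifts the sum by one step, and the wrap-around term
    is [cexp2pi (r M) = 1 = cexp2pi 0]. *)
Lemma csum_cexp2pi_arith r M :
  cexp2pi r <> RtoC 1 -> cexp2pi (r * INR M) = RtoC 1 ->
  csum M (fun t => cexp2pi (r * INR t)) = RtoC 0.
Proof.
  intros hr hrM. set (g := fun t => cexp2pi (r * INR t)).
  assert (hshift : (cexp2pi r * csum M g)%C = csum M g).
  { rewrite <- csum_scal.
    rewrite (csum_ext _ _ (fun t => g (S t))).
    2:{ intros t _. unfold g. rewrite <- cexp2pi_add, S_INR. f_equal; ring. }
    pose proof (csum_recl M g) as hrec. simpl in hrec.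
    assert (hg0 : g O = RtoC 1) by (unfold g; rewrite Rmult_0_r; apply (cexp2pi_nat 0)).
    unfold g at 2 in hrec. rewrite hrM, hg0 in hrec.
    apply (f_equal (fun u => u - RtoC 1)%C) in hrec.
    ring_simplify in hrec. rewrite <- hrec. ring. }
  destruct (Ceq_dec (csum M g) (RtoC 0)) as [|hnz]; auto.
  exfalso. apply (Cmult_neq_0 (csum M g) (cexp2pi r - RtoC 1)%C hnz).
  - intro E. apply hr. replace (cexp2pi r) with ((cexp2pi r - RtoC 1) + RtoC 1)%C
      by ring. rewrite E. ring.
  - replace (csum M g * (cexp2pi r - RtoC 1))%C
      with (cexp2pi r * csum M g - csum M g)%C by ring.
    rewrite hshift. ring.
Qed.

Lemma csum_twisted_block_eq0 A M (h u : nat -> C) r :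
  cexp2pi r <> RtoC 1 -> cexp2pi (r * INR M) = RtoC 1 ->
  (forall c t, (c < A)%nat -> h (c + A * t)%nat = (u c * cexp2pi (r * INR t))%C) ->
  csum (A * M) h = RtoC 0.
Proof.
  intros hr hrM hh. rewrite csum_mul_range. apply csum_eq0. intros c hc.
  rewrite (csum_ext _ _ (fun t => u c * cexp2pi (r * INR t))%C) by auto.
  rewrite csum_scal, csum_cexp2pi_arith by auto. apply Cmult_0_r.
Qed.

Lemma mod_pow_add_mul p c l t j : (j <= l)%nat ->
  ((c + p ^ l * t) mod p ^ j = c mod p ^ j)%nat.
Proof.
  intros hj. replace l with ((l - j) + j)%nat by lia.
  rewrite Nat.pow_add_r.
  replace (p ^ (l - j) * p ^ j * t)%nat with ((p ^ (l - j) * t) * p ^ j)%nat by ring.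
  apply Nat.Div0.mod_add.
Qed.

Lemma is_Zp_mod p z i j : is_Zp p z -> (i <= j)%nat -> (z j mod p ^ i = z i)%nat.
Proof.
  intros hz hij. replace j with (i + (j - i))%nat by lia.
  induction (j - i)%nat as [|d IHd].
  - rewrite Nat.add_0_r. apply Nat.mod_small, hz.
  - rewrite Nat.add_succ_r. destruct (hz (i + d)%nat) as [_ H].
    rewrite <- IHd, <- H, Nat.pow_add_r, Nat.Div0.mod_mul_r, Nat.mul_comm,
      Nat.Div0.mod_add, Nat.Div0.mod_mod.
    reflexivity.
Qed.

Lemma is_Zp_ord_mod_neq0 p z o m e : is_Zp p z -> ordZp_is p z o ->
  (o < m <= e)%nat -> (z e mod p ^ m <> 0)%nat.
Proof.
  intros hz [_ hnz] hm hdiv. apply hnz.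
  rewrite <- (is_Zp_mod p z (S o) e hz) by lia.
  apply Nat.Lcm0.mod_divide. apply Nat.Lcm0.mod_divide in hdiv.
  eapply Nat.divide_trans; [|exact hdiv].
  replace m with (S o + (m - S o))%nat by lia.
  rewrite Nat.pow_add_r. apply Nat.divide_factor_l.
Qed.

Lemma meet_depth_ext p x y a l :
  (forall j, (j <= l)%nat -> x j = y j) -> meet_depth p x a l = meet_depth p y a l.
Proof. induction l; intros H; simpl; auto. rewrite H, IHl by auto. reflexivity. Qed.

Lemma dC_embedZp_add_mul p a l c t :
  dC p (embedZp p (c + p ^ l * t)) a l = dC p (embedZp p c) a l.
Proof.
  unfold dC. do 3 f_equal. apply meet_depth_ext.
  intros j hj. apply mod_pow_add_mul; auto.
Qed.

Lemma cexp2pi_frac_kx_embedZp p e z n : (p <> 0)%nat ->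
  cexp2pi (frac_kx p e z (embedZp p n)) = cexp2pi (INR (z e * n) / INR (p ^ e)).
Proof.
  intros hp. unfold frac_kx, embedZp.
  rewrite Nat.Div0.mul_mod_idemp_r. apply cexp2pi_mod, Nat.pow_nonzero; auto.
Qed.

Section RiemannSums.

Variables (p e l : nat) (z : nat -> nat) (a : nat).
Hypothesis hp : (p <> 0)%nat.
Hypothesis hle : (l <= e)%nat.
Hypothesis hz_unit : (z e mod p ^ (e - l) <> 0)%nat.

Let INR_pow_neq0 n : INR (p ^ n) <> 0.
Proof. apply not_0_INR, Nat.pow_nonzero; auto. Qed.

Let INR_pow_split i j : (i <= j)%nat -> INR (p ^ j) = INR (p ^ i) * INR (p ^ (j - i)).
Proof. intros hij. rewrite <- mult_INR, <- Nat.pow_add_r. do 2 f_equal. lia. Qed.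

Definition phi_integrand (x : nat -> nat) : C :=
  (cexp2pi (frac_kx p e z x) * RtoC (powerRZ (INR p) (- dC p x a l)))%C.

Let r := INR (z e) / INR (p ^ (e - l)).

Let cexp2pi_r_neq1 : cexp2pi r <> RtoC 1.
Proof.
  unfold r. rewrite <- cexp2pi_mod by (apply Nat.pow_nonzero; auto).
  apply cexp2pi_frac_neq1. split.
  - lia.
  - apply Nat.mod_upper_bound, Nat.pow_nonzero; auto.
Qed.

Let cexp2pi_r_period N : (e <= N)%nat -> cexp2pi (r * INR (p ^ (N - l))) = RtoC 1.
Proof.
  intros hN. rewrite <- (cexp2pi_nat (z e * p ^ (N - e))).
  f_equal. unfold r.
  rewrite (INR_pow_split (e - l) (N - l)), mult_INR by lia.
  replace (N - l - (e - l))%nat with (N - e)%nat by lia.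
  field. apply INR_pow_neq0.
Qed.

Let phi_integrand_block c t :
  phi_integrand (embedZp p (c + p ^ l * t)) =
  (phi_integrand (embedZp p c) * cexp2pi (r * INR t))%C.
Proof.
  unfold phi_integrand.
  rewrite dC_embedZp_add_mul, !cexp2pi_frac_kx_embedZp by auto.
  replace (INR (z e * (c + p ^ l * t)) / INR (p ^ e))
    with (INR (z e * c) / INR (p ^ e) + r * INR t).
  - rewrite cexp2pi_add. ring.
  - unfold r. rewrite (INR_pow_split l e hle), !mult_INR, plus_INR, mult_INR.
    field. split; apply INR_pow_neq0.
Qed.

Lemma riemann_sum_phi_integrand N : (e <= N)%nat ->
  riemann_sum p phi_integrand N = RtoC 0.
Proof.
  intros hN. unfold riemann_sum. rewrite sum_n_csum.
  replace (S (p ^ N - 1)) with (p ^ l * p ^ (N - l))%nat.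
  2:{ rewrite <- Nat.pow_add_r. replace (l + (N - l))%nat with N by lia.
      pose proof (Nat.pow_nonzero p N hp). lia. }
  rewrite (csum_twisted_block_eq0 _ _ _ (fun c => phi_integrand (embedZp p c)) r).
  - apply Cmult_0_r.
  - exact cexp2pi_r_neq1.
  - apply cexp2pi_r_period; auto.
  - intros c t _. apply phi_integrand_block.
Qed.

End RiemannSums.

Theorem mainTheorem1 (p : nat) (hp : prime (Z.of_nat p))
  (e : nat) (z : nat -> nat) (hz : is_Zp p z) (o : nat) (ho : ordZp_is p z o)
  (hk : absp p (ordQp_of o e) > 1)
  (l a : nat) (ha : (a < p ^ l)%nat)
  (hl : (Z.of_nat l < - ordQp_of o e - 2)%Z) :
  phi p e z a l = RtoC 0.
Proof.
  (* [hk] already follows from [hl], and the vanishing holds for every residue [a]. *)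
  pose proof (prime_ge_2 _ hp) as hp2.
  unfold ordQp_of in hl.
  assert (hz_unit : (z e mod p ^ (e - l) <> 0)%nat)
    by (apply (is_Zp_ord_mod_neq0 p z o); auto; lia).
  assert (hsum : forall N, (e <= N)%nat -> riemann_sum p (phi_integrand p e l z a) N = RtoC 0)
    by (intros; apply riemann_sum_phi_integrand; auto; lia).
  unfold phi, haar_int_Zp. fold (phi_integrand p e l z a).
  rewrite (Lim_seq_ext_loc _ (fun _ => 0)), (Lim_seq_ext_loc (fun N => Im _) (fun _ => 0)).
  - rewrite Lim_seq_const. apply Cmult_0_r.
  - exists e. intros N hN. rewrite hsum; auto.
  - exists e. intros N hN. rewrite hsum; auto.
Qed.
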